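(* Let $q,q^\dagger\in[1,2]$ and let $s^\dagger,s'$ be real numbers with $s'<s^\dagger-\left(\frac{d}{q^\dagger}-\frac dq\right)_+$, where $x_+=\max\{x,0\}$. Then $B^{s^\dagger,q^\dagger\wedge q,q}(\mathcal Z)$ is continuously embedded in $B^{s',q}(\mathcal Z)$, where $q^\dagger\wedge q=\min\{q^\dagger,q\}$.
   Context: Let $d\ge1$, $\mathcal X\subset\mathbb R^d$ with a fixed basis $\{\phi_\ell\}_{\ell\ge1}$, $\mathcal T\subset[0,T]$ bounded, $\mathcal Z=\mathcal X\times\mathcal T$. Functions on $\mathcal Z$ are identified with sequences of temporal functions via $u(\mathbf x,t)=\sum_{\ell}u_\ell(t)\phi_\ell(\mathbf x)$. For $p\ge1$, $\|u_\ell\|_p$ denotes the $L^p(\mathcal T)$-norm of the temporal coefficient function. For $r,p\ge1$ and $s\in\mathbb R$, let $\tau_r(s)=\frac sd+\frac12-\frac1r$, $\|u\|_{s,r,p}=\big(\sum_\ell \ell^{\tau_r(s)r}\|u_\ell\|_p^r\big)^{1/r}$, $B^{s,r,p}(\mathcal Z)=\{u:\|u\|_{s,r,p}<\infty\}$, and $B^{s,q}(\mathcal Z):=B^{s,q,q}(\mathcal Z)$. *)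

From HB Require Import structures.
From mathcomp Require Import all_boot all_order all_algebra.
From mathcomp Require Import all_classical all_reals all_analysis.
Set Implicit Arguments. Unset Strict Implicit. Unset Printing Implicit Defensive.
Import Order.TTheory GRing.Theory Num.Theory.
Local Open Scope classical_set_scope.
Local Open Scope ring_scope.

(* A function u on Z = X x T is identified with the sequence of its temporal
   coefficient functions u_l : R -> R (l >= 1); the value u 0 is ignored. *)
Definition Lp_T {R : realType} (Tset : set R) (p : R) (f : R -> R) : \bar R :=
  Lnorm (@lebesgue_measure R) p%:E ((EFin \o f) \_ Tset).

Definition tau {R : realType} (d : nat) (r s : R) : R :=
  s / d%:R + 2^-1 - r^-1.

Definition besov_norm {R : realType} (d : nat) (Tset : set R) (s r p : R)
  (u : nat -> R -> R) : \bar R :=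
  ((\sum_(1 <= l <oo)
      ((l%:R `^ (tau d r s * r))%:E * (Lp_T Tset p (u l)) `^ r)) `^ r^-1)%E.

Definition besov_space {R : realType} (d : nat) (Tset : set R) (s r p : R)
  : set (nat -> R -> R) :=
  [set u | (besov_norm d Tset s r p u < +oo)%E].

Definition continuously_embedded {R : realType} (d : nat) (Tset : set R)
  (s1 r1 p1 s2 r2 p2 : R) : Prop :=
  besov_space d Tset s1 r1 p1 `<=` besov_space d Tset s2 r2 p2 /\
  exists C : R, 0 < C /\
    forall u, besov_space d Tset s1 r1 p1 u ->
      (besov_norm d Tset s2 r2 p2 u <= C%:E * besov_norm d Tset s1 r1 p1 u)%E.

From HB Require Import structures.
From mathcomp Require Import all_boot all_order all_algebra.
From mathcomp Require Import all_classical all_reals all_analysis.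
From mathcomp Require Import lra.
Import Order.TTheory GRing.Theory Num.Theory.
Local Open Scope classical_set_scope.
Local Open Scope ring_scope.

(* Put r := min(q†, q) <= q.  The condition on s' says exactly that
   tau_q(s') <= tau_r(s†), so each weight l^(tau_q(s') q) of the target norm is
   at most the (q/r)-th power of the weight l^(tau_r(s†) r) of the source norm.
   What remains is the inclusion of l^r in l^q with norm 1, i.e. the
   superadditivity  sum_l a_l^p <= (sum_l a_l)^p  of t |-> t^p for p = q/r >= 1,
   which follows termwise from  a_l^p <= (sum a)^(p-1) a_l.  The temporal norms
   enter only as nonnegative extended reals. *)

Section ell_embedding.
Context {R : realType} (P : pred nat).

Lemma poweR_le_mul (p : R) (x S : \bar R) : 1 <= p -> (0 <= x)%E -> (x <= S)%E ->
  (x `^ p <= S `^ (p - 1) * x)%E.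
Proof.
move=> p1 x0 xS; have pE : p = p - 1 + 1 by rewrite subrK.
rewrite {1}pE poweRD ?poweRe1 //; last first.
  by rewrite add_neq0_poweRD_def // -pE gt_eqF // (lt_le_trans ltr01).
apply: lee_wpmul2r => //; apply: gt0_ler_poweR; rewrite ?subr_ge0 //.
  by rewrite in_itv /= leey andbT.
by rewrite in_itv /= leey andbT (le_trans x0).
Qed.

Lemma nneseries_ge_term (x : nat -> \bar R) n :
  (forall l, P l -> 0 <= x l)%E -> P n -> (x n <= \sum_(l <oo | P l) x l)%E.
Proof.
move=> x0 Pn; rewrite (@nneseriesD1 _ x n P x0 Pn) leeDl //.
by apply: nneseries_ge0 => l _ /andP[/x0].
Qed.

Lemma nneseries_poweR_le (p : R) (x : nat -> \bar R) :
  1 <= p -> (forall l, P l -> 0 <= x l)%E ->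
  (\sum_(l <oo | P l) x l `^ p <= (\sum_(l <oo | P l) x l) `^ p)%E.
Proof.
move=> p1 x0; have p0 : p != 0 by rewrite gt_eqF // (lt_le_trans ltr01).
set S := (\sum_(l <oo | P l) x l)%E.
have S0 : (0 <= S)%E by apply: nneseries_ge0 => l _ /x0.
have [->|Sfin] := eqVneq S +oo%E; first by rewrite poweRyr // leey.
have SE : S = (fine S)%:E by rewrite fineK // ge0_fin_numE // ltey.
have SpE : (S `^ p = S `^ (p - 1) * S)%E.
  have pE : p = p - 1 + 1 by rewrite subrK.
  by rewrite {1}pE poweRD ?poweRe1 // add_neq0_poweRD_def // -pE.
have SpfE : (S `^ (p - 1) = (fine S `^ (p - 1))%:E)%E by rewrite -poweR_EFin -SE.
rewrite SpE SpfE /S -nneseriesZl //.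
apply: lee_nneseries => [l _ _|l Pl]; first exact: poweR_ge0.
rewrite -poweR_EFin -SE; apply: poweR_le_mul => //; first exact: x0.
exact: nneseries_ge_term.
Qed.

Lemma weighted_ell_norm_le (r q : R) (w v : nat -> R) (L : nat -> \bar R) :
  0 < r -> r <= q -> (forall l, P l -> 0 <= w l) ->
  (forall l, P l -> 0 <= v l <= w l `^ (q / r)) -> (forall l, (0 <= L l)%E) ->
  ((\sum_(l <oo | P l) ((v l)%:E * L l `^ q)) `^ q^-1 <=
   (\sum_(l <oo | P l) ((w l)%:E * L l `^ r)) `^ r^-1)%E.
Proof.
move=> r0 rq w0 vw L0.
have q0 : 0 < q by exact: lt_le_trans rq.
have qr1 : 1 <= q / r by rewrite ler_pdivlMr // mul1r.
have x0 l : P l -> (0 <= (w l)%:E * L l `^ r)%E.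
  by move=> Pl; rewrite mule_ge0 ?poweR_ge0 // lee_fin w0.
have y0 l : P l -> (0 <= (v l)%:E * L l `^ q)%E.
  by move=> Pl; rewrite mule_ge0 ?poweR_ge0 // lee_fin; case/andP: (vw l Pl).
have term l : P l -> ((v l)%:E * L l `^ q <= ((w l)%:E * L l `^ r) `^ (q / r))%E.
  move=> Pl; have /andP[_ vw_l] := vw l Pl.
  rewrite poweRM ?lee_fin ?w0 ?poweR_ge0 // -poweRrM poweR_EFin.
  have -> : r * (q / r) = q by rewrite mulrCA divff ?mulr1 // gt_eqF.
  by apply: lee_wpmul2r; [exact: poweR_ge0|rewrite lee_fin].
have sum_le : (\sum_(l <oo | P l) ((v l)%:E * L l `^ q) <=
    (\sum_(l <oo | P l) ((w l)%:E * L l `^ r)) `^ (q / r))%E.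
  apply: le_trans (nneseries_poweR_le _ _ qr1 x0).
  by apply: lee_nneseries => [l _ /y0|l /term].
have -> : r^-1 = q / r * q^-1 by rewrite mulrAC divff ?mul1r // gt_eqF.
rewrite poweRrM; apply: gt0_ler_poweR => //; first by rewrite invr_ge0 ltW.
  by rewrite in_itv /= leey andbT; apply: nneseries_ge0 => l _ /y0.
by rewrite in_itv /= leey poweR_ge0.
Qed.

End ell_embedding.

Lemma divr_min_subr (R : realFieldType) (D x y : R) : 0 <= D -> 0 < x -> 0 < y ->
  D / Num.min x y - D / y = Num.max (D / x - D / y) 0.
Proof.
move=> D0 x0 y0; have [xy|yx] := leP x y.
- by rewrite max_l // subr_ge0 ler_wpM2l // lef_pV2.
- by rewrite subrr max_r // subr_le0 ler_wpM2l // lef_pV2 // ltW.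
Qed.

Lemma tau_le (R : realType) (d : nat) (r q s s' : R) : (0 < d)%N ->
  s' + (d%:R / r - d%:R / q) <= s -> tau d q s' <= tau d r s.
Proof.
move=> d0 hs; have D0 : 0 < d%:R :> R by rewrite ltr0n.
have h : (s' - s) / d%:R <= q^-1 - r^-1 by rewrite ler_pdivrMr // mulrC mulrBr; lra.
by rewrite /tau; move: h; rewrite mulrBl; lra.
Qed.

Theorem proposition4p1 (R : realType) (d : nat) (Tmax : R) (Tset : set R)
  (q qd sd s' : R) :
  (1 <= d)%N ->
  measurable Tset -> Tset `<=` `[0, Tmax] ->
  1 <= q <= 2 -> 1 <= qd <= 2 ->
  s' < sd - Num.max (d%:R / qd - d%:R / q) 0 ->
  continuously_embedded d Tset sd (Num.min qd q) q s' q q.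
Proof.
move=> d1 _ _ /andP[q1 _] /andP[qd1 _] hs.
have q0 : 0 < q by exact: lt_le_trans q1.
have qd0 : 0 < qd by exact: lt_le_trans qd1.
set r := Num.min qd q.
have r0 : 0 < r by rewrite lt_min qd0 q0.
have rq : r <= q by rewrite ge_min lexx orbT.
have tau_qr : tau d q s' <= tau d r sd.
  by apply: tau_le => //; move: hs; rewrite -divr_min_subr ?ler0n // -/r; lra.
have embed u : (besov_norm d Tset s' q q u <= besov_norm d Tset sd r q u)%E.
  rewrite /besov_norm !(eseries_cond _ _ 1).
  apply: weighted_ell_norm_le => // [l /= l1|l]; last exact: Lnorm_ge0.
  rewrite powR_ge0 -powRrM -mulrA [r * _]mulrCA divff ?mulr1 ?gt_eqF //.
  by rewrite ler_powR ?ler1n // ler_pM2r.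
split => [u|]; first exact: le_lt_trans (embed u).
by exists 1; split => // u _; rewrite mul1e.
Qed.
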